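(* Let $q\ge 2$ and $n\ge q+1$. If $\mathcal C\subseteq[q]^n$ is a code with insdel distance $d_I(\mathcal C)=2n-2$, then $|\mathcal C|\le q$.
   Context: $[q]=\{1,\dots,q\}$. For $\mathbf u,\mathbf v\in[q]^n$, the insdel distance $d_I(\mathbf u,\mathbf v)$ is the minimum number of insertions and deletions transforming $\mathbf u$ into $\mathbf v$; equivalently $d_I(\mathbf u,\mathbf v)=2n-2\ell_{\rm LCS}(\mathbf u,\mathbf v)$ where $\ell_{\rm LCS}$ is the length of a longest common subsequence. $d_I(\mathcal C)$ is the minimum insdel distance between distinct codewords. *)

From mathcomp Require Import all_boot.
Set Implicit Arguments. Unset Strict Implicit. Unset Printing Implicit Defensive.

(* Alphabet [q] is modelled by 'I_q (symbols 0..q-1); words of [q]^n are n.-tuple 'I_q. *)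

Definition lcs_len (T : eqType) n (u v : n.-tuple T) : nat :=
  \max_(m : n.-tuple bool | subseq (mask m u) v) size (mask m u).

Definition insdel_dist (T : eqType) n (u v : n.-tuple T) : nat :=
  2 * n - 2 * lcs_len u v.

Definition min_insdel_dist_eq (q n : nat) (C : {set n.-tuple 'I_q}) (d : nat) : Prop :=
  (exists u v, [/\ u \in C, v \in C, u != v & insdel_dist u v = d]) /\
  (forall u v, u \in C -> v \in C -> u != v -> d <= insdel_dist u v).

From mathcomp Require Import all_boot zify.

Set Implicit Arguments.
Unset Strict Implicit.
Unset Printing Implicit Defensive.

(* Pigeonhole: a word of length n > q over q letters repeats some letter a, so
   it contains the subsequence [a; a].  Two codewords repeating the same letter
   share a common subsequence of length 2, hence lie at insdel distance at most
   2n - 4 < 2n - 2.  So sending each codeword to one of its repeated letters is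
   injective on the code. *)

Lemma not_uniq_subseq_pair (T : eqType) (s : seq T) :
  ~~ uniq s -> exists a, subseq [:: a; a] s.
Proof.
elim: s => [//|x s IHs] /=; rewrite negb_and negbK => /orP[xs | /IHs[a sub_aa]].
  by exists x; rewrite /= eqxx sub1seq.
by exists a; apply: subseq_trans sub_aa (subseq_cons s x).
Qed.

Lemma tuple_subseq_pair (T : finType) n (u : n.-tuple T) :
  #|T| < n -> exists a, subseq [:: a; a] u.
Proof.
move=> card_lt; apply: not_uniq_subseq_pair; apply: contraL card_lt => u_uniq.
by rewrite -leqNgt -(size_tuple u) cardE uniq_leq_size // => x; rewrite mem_enum.
Qed.

Lemma lcs_len_ge_common_subseq (T : eqType) n (u v : n.-tuple T) s :
  subseq s u -> subseq s v -> size s <= lcs_len u v.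
Proof.
case/subseqP=> m size_m ->{s} sub_v.
have size_m_n : size m == n by rewrite size_m size_tuple.
exact: (@leq_bigmax_cond _ (fun m' : n.-tuple bool => subseq (mask m' u) v)
          (fun m' => size (mask m' u)) (Tuple size_m_n)).
Qed.

Lemma card_le_of_no_shared_pair (T : finType) n (C : {set n.-tuple T}) :
  #|T| < n ->
  {in C &, forall u v : n.-tuple T, forall a,
     subseq [:: a; a] u -> subseq [:: a; a] v -> u = v} ->
  #|C| <= #|T|.
Proof.
move=> card_lt no_shared.
pose rep (u : n.-tuple T) := [pick a | subseq [:: a; a] u].
have repP u : {a | rep u = Some a & subseq [:: a; a] u}.
  rewrite /rep; case: pickP => [a sub_aa | none]; first by exists a.
  by exfalso; case: (tuple_subseq_pair u card_lt) => a; rewrite none.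
have rep_inj : {in C &, injective rep}.
  move=> u v uC vC; case: (repP u) (repP v) => a -> sub_u [b -> sub_v] [eq_ab].
  by apply: (no_shared u v uC vC a sub_u); rewrite eq_ab.
rewrite -(card_in_imset rep_inj) -[X in _ <= X](card_imset _ (@Some_inj _)).
apply: subset_leq_card; apply/subsetP => _ /imsetP[u _ ->].
by case: (repP u) => a -> _; rewrite imset_f.
Qed.

Theorem lemma3p5 (q n : nat) (C : {set n.-tuple 'I_q}) :
  2 <= q -> q + 1 <= n ->
  min_insdel_dist_eq C (2 * n - 2) ->
  #|C| <= q.
Proof.
move=> q_ge2 n_gt_q [_ dist_ge].
rewrite -[q in _ <= q]card_ord; apply: card_le_of_no_shared_pair.
  by rewrite card_ord -addn1.
move=> u v uC vC a sub_u sub_v; apply/eqP/negPn/negP => neq_uv.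
have := dist_ge u v uC vC neq_uv; have := lcs_len_ge_common_subseq sub_u sub_v.
rewrite /insdel_dist /=; lia.
Qed.
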